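(* Let $n\ge 2$. For $0\le k\le n-2$, $$a(n,k)={\left[ n \atop n-k\right]}_2 .$$
   Context: $A_n$ is the alternating group on $\{1,\dots,n\}$, $T(A_n)=\{(1\,2)(i\,j)\mid 1\le i<j\le n\}$, $\ell_{T(A_n)}(v)=\min\{r\ge 0\mid v=t_1\cdots t_r,\ t_i\in T(A_n)\}$, and $a(n,k)$ is the number of $v\in A_n$ with $\ell_{T(A_n)}(v)=k$. The 2-restricted unsigned Stirling number of the first kind ${\left[ n \atop j\right]}_2$ is the number of permutations of $\{1,\dots,n\}$ with exactly $j$ cycles (fixed points counted) in which $1$ and $2$ lie in distinct cycles. *)

From mathcomp Require Import all_boot all_order all_fingroup all_solvable.
Set Implicit Arguments. Unset Strict Implicit. Unset Printing Implicit Defensive.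

(* Points 1,2 of {1,...,n} are the ordinals with values 0,1 of 'I_n. *)

(* T(A_n) = {(1 2)(i j) | 1 <= i < j <= n}.  In MathComp, (s * t)%g applies s
   first, so the function (1 2)∘(i j) is (tperm i j * tperm x y)%g. *)
Definition TA (n : nat) : {set 'S_n} :=
  [set s : 'S_n | [exists x : 'I_n, exists y : 'I_n, exists i : 'I_n,
     exists j : 'I_n,
     [&& val x == 0%N, val y == 1%N, (i < j)%N & s == (tperm i j * tperm x y)%g]]].

Definition prodT (n r : nat) (v : 'S_n) : bool :=
  [exists t : r.-tuple 'S_n,
     all (fun s => s \in TA n) t && (v == (\prod_(s <- t) s)%g)].

Definition lenT_eq (n : nat) (v : 'S_n) (k : nat) : bool :=
  prodT k v && [forall r : 'I_k, ~~ prodT r v].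

Definition a_nk (n k : nat) : nat :=
  #|[set v in ('Alt_('I_n))%g | lenT_eq v k]|.

Definition stirling1_2 (n j : nat) : nat :=
  #|[set s : 'S_n | (#|porbits s| == j) &&
      [exists x : 'I_n, exists y : 'I_n,
         [&& val x == 0%N, val y == 1%N & porbit s x != porbit s y]]]|.

From mathcomp Require Import all_boot all_order all_fingroup all_solvable.
From mathcomp Require Import zify.
Set Implicit Arguments. Unset Strict Implicit. Unset Printing Implicit Defensive.
Local Open Scope group_scope.

(* Write t = (1 2) and tlen s = n - #cycles(s) for the length of s with
   respect to all transpositions.  Every element of T(A_n) has the form (i j) t,
   and multiplying v by it raises min (tlen v) (tlen (t v)) by at most one,
   because t (i j) t is again a transposition.  So the T(A_n)-length of an even
   v is at least this minimum, and splitting cycles greedily shows that it is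
   attained.  Finally v |-> (if 1 and 2 share a cycle of v then t v else v) is
   a bijection from A_n onto the permutations in which 1 and 2 lie in distinct
   cycles, and it sends the minimum to tlen of the image. *)

Section TranspositionLength.

Variable T : finType.
Implicit Types (s : {perm T}) (x y : T).

Definition ncycles s := #|porbits s|.
Definition tlen s := #|T| - ncycles s.

Lemma ncycles_le s : ncycles s <= #|T|.
Proof. exact: leq_imset_card. Qed.

Lemma ncycles1 : ncycles 1 = #|T|.
Proof.
rewrite /ncycles /porbits card_imset // => a b /eqP.
by rewrite eq_porbit_mem => /porbitP [i]; rewrite expg1n perm1.
Qed.

Lemma tlen1 : tlen 1 = 0.
Proof. by rewrite /tlen ncycles1 subnn. Qed.

Lemma ncycles_mul_tperm x y s :
  ncycles (tperm x y * s) + (x \notin porbit s y).*2 = ncycles s + (x != y).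
Proof. exact: porbits_mul_tperm. Qed.

Lemma tlen_eq_ncycles k s : k <= #|T| -> (tlen s == k) = (ncycles s == #|T| - k).
Proof. by have := ncycles_le s; rewrite /tlen => ? ?; apply/eqP/eqP; lia. Qed.

Lemma tlen_mul_tperm_le x y s : tlen (tperm x y * s) <= (tlen s).+1.
Proof.
have [->|neq_xy] := eqVneq x y; first by rewrite tperm1 mul1g.
have := ncycles_mul_tperm x y s; have := ncycles_le s.
have := ncycles_le (tperm x y * s); rewrite /tlen neq_xy.
by case: (x \in _) => /=; lia.
Qed.

(* Multiplying by the transposition (p, s p) splits the cycle through p. *)
Lemma tlen_split s : s != 1 -> exists x y, x != y /\ tlen (tperm x y * s) < tlen s.
Proof.
move=> s_neq1; have [p sp_neq_p] : exists p, s p != p.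
  apply/existsP; apply: contraR s_neq1 => /existsPn fix_s.
  by apply/eqP/permP => z; rewrite perm1; apply/eqP/negPn.
exists p, (s p); split; first by rewrite eq_sym.
have := ncycles_mul_tperm p (s p) s.
rewrite porbit_sym (mem_porbit s 1) eq_sym sp_neq_p.
have := ncycles_le (tperm p (s p) * s); rewrite /tlen /=; lia.
Qed.

Lemma tlen_eq0 s : (tlen s == 0) = (s == 1).
Proof.
apply/idP/idP => [|/eqP->]; last by rewrite tlen1.
by apply: contraLR => /tlen_split [x [y [_ lt_s]]]; rewrite -lt0n (leq_ltn_trans _ lt_s).
Qed.

Lemma porbit_mul_tperm_sep x y s : x != y ->
  (porbit (tperm x y * s) x != porbit (tperm x y * s) y) = (porbit s x == porbit s y).
Proof.
move=> neq_xy; have := ncycles_mul_tperm x y s.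
have := ncycles_mul_tperm x y (tperm x y * s); rewrite tpermKg !eq_porbit_mem neq_xy.
case: (x \in porbit s y) (x \in porbit _ y) => [] [] /=; lia.
Qed.

End TranspositionLength.

Lemma mul_tperm_conj (T : finType) (x y p q : T) :
  tperm x y * tperm (tperm x y p) (tperm x y q) = tperm p q * tperm x y.
Proof. by rewrite -tpermJ conjgE tpermV !mulgA tperm2 mul1g. Qed.

Section TwistedLength.

Variables (T : finType) (x y : T).
Local Notation t := (tperm x y).
Implicit Types (v : {perm T}) (p q : T).

(* For an even v this is the length of v with respect to {(p q) t}. *)
Definition tlen_twist v := minn (tlen v) (tlen (t * v)).

Lemma tlen_twist_mul_tperm v : tlen_twist (t * v) = tlen_twist v.
Proof. by rewrite /tlen_twist tpermKg minnC. Qed.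

Lemma tlen_twist_mul_le p q v : tlen_twist (tperm p q * t * v) <= (tlen_twist v).+1.
Proof.
have le_t : tlen (tperm p q * t * v) <= (tlen (t * v)).+1.
  by rewrite -mulgA tlen_mul_tperm_le.
have le_tt : tlen (t * (tperm p q * t * v)) <= (tlen v).+1.
  have := mul_tperm_conj x y (t p) (t q); rewrite !tpermK => conj_pq.
  by rewrite !mulgA conj_pq -!mulgA tpermKg tlen_mul_tperm_le.
rewrite /tlen_twist; lia.
Qed.

Lemma tlen_twist_split v : 0 < tlen_twist v ->
  exists p q, p != q /\ tlen_twist (tperm p q * v) < tlen_twist v.
Proof.
rewrite /tlen_twist; case: (leqP (tlen v) (tlen (t * v))) => _ pos.
  have [|p [q [neq_pq lt_pq]]] := tlen_split (s := v); first by rewrite -tlen_eq0 -lt0n.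
  by exists p, q; split=> //; apply: leq_ltn_trans (geq_minl _ _) lt_pq.
have [|p [q [neq_pq lt_pq]]] := tlen_split (s := t * v); first by rewrite -tlen_eq0 -lt0n.
exists (t p), (t q); split; first by rewrite (inj_eq perm_inj).
by rewrite mulgA mul_tperm_conj -mulgA; apply: leq_ltn_trans (geq_minr _ _) lt_pq.
Qed.

End TwistedLength.

Section Separation.

Variables (T : finType) (x y : T).
Hypothesis neq_xy : x != y.
Local Notation t := (tperm x y).
Implicit Types (s v : {perm T}).

Definition separate v := if porbit v x == porbit v y then t * v else v.

Lemma separate_sep v : porbit (separate v) x != porbit (separate v) y.
Proof.
by rewrite /separate; case: ifP => [sep_v | /negbT //]; rewrite porbit_mul_tperm_sep.
Qed.

Lemma tlen_separate v : tlen (separate v) = tlen_twist x y v.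
Proof.
have := ncycles_mul_tperm x y v; have := ncycles_le v; have := ncycles_le (t * v).
rewrite /separate /tlen_twist /tlen eq_porbit_mem neq_xy.
case: (x \in porbit v y) => /=; lia.
Qed.

Lemma odd_separate v : ~~ odd_perm v ->
  odd_perm (separate v) = (porbit v x == porbit v y).
Proof.
by move=> /negbTE ev; rewrite /separate; case: ifP => _; rewrite ?odd_permM ?odd_tperm ?neq_xy ev.
Qed.

Lemma separate_inj v1 v2 : ~~ odd_perm v1 -> ~~ odd_perm v2 ->
  separate v1 = separate v2 -> v1 = v2.
Proof.
move=> ev1 ev2 eq12; have same12 : (porbit v1 x == porbit v1 y) = (porbit v2 x == porbit v2 y).
  by rewrite -odd_separate // eq12 odd_separate.
by move: eq12; rewrite /separate same12; case: ifP => // _; apply: mulgI.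
Qed.

Definition unseparate s := if odd_perm s then t * s else s.

Lemma unseparate_even s : ~~ odd_perm (unseparate s).
Proof.
by rewrite /unseparate; case: ifP => [odd_s | /negbT //]; rewrite odd_permM odd_tperm neq_xy odd_s.
Qed.

Lemma unseparateK s : porbit s x != porbit s y -> separate (unseparate s) = s.
Proof.
move=> sep_s; rewrite /unseparate; case: ifP => _; rewrite /separate.
  have := porbit_mul_tperm_sep s neq_xy; rewrite (negbTE sep_s) => /negbFE ->.
  exact: tpermKg.
by rewrite (negbTE sep_s).
Qed.

Lemma card_even_tlen_twist k :
  #|[set v | ~~ odd_perm v & tlen_twist x y v == k]| =
  #|[set s | porbit s x != porbit s y & tlen s == k]|.
Proof.
have sep_im : [set s | porbit s x != porbit s y & tlen s == k] =
              separate @: [set v | ~~ odd_perm v & tlen_twist x y v == k].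
  apply/setP => s; rewrite inE; apply/andP/imsetP => [[sep_s tlen_s] | [v]].
    exists (unseparate s); last by rewrite unseparateK.
    by rewrite inE unseparate_even -tlen_separate unseparateK.
  by rewrite inE => /andP[_ /eqP<-] ->; rewrite separate_sep tlen_separate eqxx.
rewrite sep_im card_in_imset // => v1 v2; rewrite !inE => /andP[ev1 _] /andP[ev2 _].
exact: separate_inj.
Qed.

End Separation.

Section AlternatingLength.

Variables (n : nat) (x y : 'I_n).
Hypotheses (x0 : val x = 0) (y1 : val y = 1%N).
Local Notation t := (tperm x y).

Lemma neq_xy : x != y.
Proof. by apply/eqP => eq_xy; move: y1; rewrite -eq_xy x0. Qed.

Lemma TA_tperm g : g \in TA n -> exists i j, g = tperm i j * t.
Proof.
rewrite inE => /existsP[x' /existsP[y' /existsP[i /existsP[j]]]].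
case/and4P=> /eqP x'0 /eqP y'1 _ /eqP ->; exists i, j.
by congr (_ * tperm _ _); apply: val_inj; rewrite ?x'0 ?y'1.
Qed.

Lemma mem_TA i j : i != j -> tperm i j * t \in TA n.
Proof.
wlog lt_ij : i j / i < j => [wlog_ij neq_ij | _].
  have [/wlog_ij|/wlog_ij|/val_inj eq_ij] := ltngtP i j; last by rewrite eq_ij eqxx in neq_ij.
    exact.
  by rewrite tpermC eq_sym; apply.
rewrite inE; apply/existsP; exists x; apply/existsP; exists y.
by apply/existsP; exists i; apply/existsP; exists j; rewrite x0 y1 lt_ij !eqxx.
Qed.

Lemma prodT0 : prodT 0 (1 : 'S_n).
Proof. by apply/existsP; exists [tuple]; rewrite /= big_nil eqxx. Qed.

Lemma prodT_mul r g v : g \in TA n -> prodT r v -> prodT r.+1 (g * v).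
Proof.
move=> TAg /existsP[s /andP[TAs /eqP ->]]; apply/existsP; exists (cons_tuple g s).
by rewrite /= TAg TAs big_cons eqxx.
Qed.

Lemma prodT_tlen_twist_le r v : prodT r v -> tlen_twist x y v <= r.
Proof.
case/existsP=> [[l /= /eqP<-]] /andP[+ /eqP->]; elim: l => [|g l IH].
  by rewrite big_nil /tlen_twist tlen1 min0n.
case/andP => /TA_tperm[i [j ->]] /IH le_l; rewrite big_cons.
by apply: leq_trans (tlen_twist_mul_le x y i j (\prod_(s <- l) s)) _; rewrite ltnS.
Qed.

Lemma prodT_tlen_twist v : ~~ odd_perm v -> prodT (tlen_twist x y v) v.
Proof.
have [m] := ubnP (tlen_twist x y v); elim: m v => // m IH v lt_vm ev.
case: (posnP (tlen_twist x y v)) => [len0 | pos].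
  rewrite len0; suff -> : v = 1 by exact: prodT0.
  apply/eqP; move/eqP: len0; rewrite /tlen_twist; case: leqP => _; rewrite tlen_eq0 //.
  by move/eqP=> tv1; move: ev; rewrite -(tpermKg x y v) tv1 mulg1 odd_tperm neq_xy.
have [p [q [neq_pq lt_pq]]] := tlen_twist_split pos.
set w := t * (tperm p q * v).
have ew : ~~ odd_perm w by rewrite !odd_permM !odd_tperm neq_xy neq_pq (negbTE ev).
have len_w : tlen_twist x y w = tlen_twist x y (tperm p q * v) by rewrite tlen_twist_mul_tperm.
have eq_v : v = tperm p q * t * w by rewrite /w -mulgA !tpermKg.
have := tlen_twist_mul_le x y p q w; rewrite -eq_v len_w => le_v.
have -> : tlen_twist x y v = (tlen_twist x y w).+1 by apply/eqP; rewrite eqn_leq len_w le_v lt_pq.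
rewrite {1}eq_v; apply: prodT_mul; first exact: mem_TA.
by apply: IH => //; rewrite len_w (leq_trans lt_pq lt_vm).
Qed.

Lemma lenT_eq_tlen_twist v k : ~~ odd_perm v -> lenT_eq v k = (tlen_twist x y v == k).
Proof.
move=> ev; apply/andP/eqP => [[/prodT_tlen_twist_le le_k /forallP min_k] | <-].
  apply/eqP; rewrite eqn_leq le_k leqNgt; apply/negP => lt_k.
  by have := min_k (Ordinal lt_k); rewrite prodT_tlen_twist.
split; first exact: prodT_tlen_twist.
by apply/forallP => r; apply/negP => /prodT_tlen_twist_le; rewrite leqNgt ltn_ord.
Qed.

End AlternatingLength.

Theorem theorem9p2 (n k : nat) :
  (2 <= n)%N -> (k <= n - 2)%N -> a_nk n k = stirling1_2 n (n - k).
Proof.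
move=> n_ge2 k_le; pose x : 'I_n := Ordinal (ltnW n_ge2); pose y : 'I_n := Ordinal n_ge2.
have a_eq : a_nk n k = #|[set v | ~~ odd_perm v & tlen_twist x y v == k]|.
  rewrite /a_nk; apply: eq_card => v; rewrite [LHS]inE Alt_even !inE.
  by apply: andb_id2l => ev; apply: lenT_eq_tlen_twist.
rewrite a_eq card_even_tlen_twist //; apply: eq_card => s.
rewrite !inE andbC tlen_eq_ncycles card_ord; last exact: leq_trans k_le (leq_subr 2 n).
congr andb; apply/idP/existsP => [sep_s | [x' /existsP[y' /and3P[/eqP x'0 /eqP y'1]]]].
  by exists x; apply/existsP; exists y; rewrite !eqxx.
have -> : x' = x by apply: val_inj; rewrite x'0.
by have -> : y' = y by apply: val_inj; rewrite y'1.
Qed.
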